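(* Let $S_1,\dots,S_n$ be i.i.d. samples, $f(x;S)$ a loss, $f_i(x)=f(x;S_i)$, $F(x)=\mathbb{E}[f(x;S)]$, $\bar F(x)=\frac1n\sum_{i=1}^nf_i(x)$. Let $x_0=0,x_1,\dots,x_K$ be candidate models and let $\tau_1,\dots,\tau_K\ge0$ satisfy, for some $\delta\in(0,1)$, \[ \mathbb{P}\big(\exists k\in\{0,\dots,K\}:\ |F(x_k)-\bar F(x_k)-(F(0)-\bar F(0))|>\tau_k\big)\le\delta, \] with $\tau_0:=0$. Let $\gamma\in[1,\infty)$ and let $k_{\mathrm{rely}}$ be the output of the Reliable Model Selection procedure. Then with probability at least $1-\delta$, $F(x_{k_{\mathrm{rely}}})\le F(x_k)+(1+\gamma)\tau_k$ for all $k\in\{0,\dots,K\}$.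
   Context: Reliable Model Selection with parameter $\gamma\in[1,\infty)$, candidates $x_0,\dots,x_K$, samples $f_1,\dots,f_n$ and widths $\tau_1,\dots,\tau_K$ (with $\tau_0:=0$): set $\theta=\min_{k\in\{0,\dots,K\}}\bar F(x_k)+\gamma\tau_k$, set $\mathcal{F}=\{k\in\{0,\dots,K\}:\bar F(x_k)+\tau_k\le\theta\}$, and output $k_{\mathrm{rely}}\in\arg\min_{k\in\mathcal{F}}\bar F(x_k)$. *)

From HB Require Import structures.
From mathcomp Require Import all_boot all_order all_algebra.
From mathcomp Require Import all_classical all_reals all_analysis.
Set Implicit Arguments. Unset Strict Implicit. Unset Printing Implicit Defensive.
Import Order.TTheory GRing.Theory Num.Theory.
Local Open Scope classical_set_scope.
Local Open Scope ring_scope.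

Definition iid_samples {d dS : measure_display} {Omega : measurableType d}
  {Sd : measurableType dS} {R : realType} (P : probability Omega R) (n : nat)
  (S : 'I_n -> Omega -> Sd) : Prop :=
  [/\ (forall i, measurable_fun setT (S i)),
      (forall i j (A : set Sd), measurable A ->
          P (S i @^-1` A) = P (S j @^-1` A)) &
      (forall (J : {set 'I_n}) (A : 'I_n -> set Sd),
          (forall j, measurable (A j)) ->
          P (\bigcap_(j in [set j | j \in J]) S j @^-1` A j) =
          (\prod_(j in J) P (S j @^-1` A j))%E)].

Definition Fbar {Omega Sd X : Type} {R : realType} (n : nat)
  (f : X -> Sd -> R) (S : 'I_n -> Omega -> Sd) (x : X) (omega : Omega) : R :=
  n%:R^-1 * \sum_(i < n) f x (S i omega).

(* Reliable Model Selection, given the empirical risks Fb k = \bar F(x_k)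
   and widths tau k (tau ord0 = 0). *)
Definition rms_theta {R : realType} (K : nat) (gamma : R)
  (Fb tau : 'I_K.+1 -> R) : R :=
  \big[Num.min/Fb ord0 + gamma * tau ord0]_(k < K.+1) (Fb k + gamma * tau k).

Definition rms_feasible {R : realType} (K : nat) (gamma : R)
  (Fb tau : 'I_K.+1 -> R) (k : 'I_K.+1) : Prop :=
  Fb k + tau k <= rms_theta gamma Fb tau.

Definition rms_output {R : realType} (K : nat) (gamma : R)
  (Fb tau : 'I_K.+1 -> R) (k : 'I_K.+1) : Prop :=
  rms_feasible gamma Fb tau k /\
  forall j, rms_feasible gamma Fb tau j -> Fb k <= Fb j.

From HB Require Import structures.
From mathcomp Require Import all_boot all_order all_algebra.
From mathcomp Require Import all_classical all_reals all_analysis.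
From mathcomp Require Import lra.
Import Order.TTheory GRing.Theory Num.Theory measurable_realfun.
Local Open Scope classical_set_scope.
Local Open Scope ring_scope.

(* Let [c := F(0) - \bar F(0)]. Outside the bad event,
   [|F(x_j) - \bar F(x_j) - c| <= tau_j] for every [j], so feasibility of
   [k_rely] and the definition of [theta] give
     [F(x_rely) - c <= \bar F(x_rely) + tau_rely <= theta
                    <= \bar F(x_k) + gamma tau_k <= F(x_k) - c + (1 + gamma) tau_k],
   and the offset [c] cancels. *)

Section reliable_model_selection.
Variables (R : realType) (K : nat) (gamma : R) (Fb tau : 'I_K.+1 -> R).

Lemma rms_theta_le (k : 'I_K.+1) : rms_theta gamma Fb tau <= Fb k + gamma * tau k.
Proof. exact: bigmin_le. Qed.

Lemma rms_feasible_le (k0 k : 'I_K.+1) :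
  rms_feasible gamma Fb tau k0 -> Fb k0 + tau k0 <= Fb k + gamma * tau k.
Proof. by move=> feas_k0; apply: le_trans feas_k0 (rms_theta_le k). Qed.

Lemma rms_feasible_risk_le (G : 'I_K.+1 -> R) (c : R) (k0 : 'I_K.+1) :
  (forall j, `|G j - Fb j - c| <= tau j) ->
  rms_feasible gamma Fb tau k0 ->
  forall k, G k0 <= G k + (1 + gamma) * tau k.
Proof.
move=> dev_le feas_k0 k.
have := rms_feasible_le k0 k feas_k0.
move: (dev_le k0) (dev_le k); rewrite !ler_norml => /andP[_ up0] /andP[lok _].
lra.
Qed.

End reliable_model_selection.

Lemma measurable_Fbar {d dS : measure_display} {Omega : measurableType d}
    {Sd : measurableType dS} {X : Type} {R : realType} (n : nat)
    (f : X -> Sd -> R) (S : 'I_n -> Omega -> Sd) (z : X) :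
  measurable_fun setT (f z) -> (forall i, measurable_fun setT (S i)) ->
  measurable_fun setT (Fbar f S z).
Proof.
move=> mfz mS; apply: measurable_funM; first exact: measurable_cst.
by apply: measurable_sum => i; apply: measurableT_comp mfz (mS i).
Qed.

Lemma measurable_exists_lt {d : measure_display} {T : measurableType d}
    {R : realType} {I : finType} (g : I -> T -> R) (t : I -> R) :
  (forall i, measurable_fun setT (g i)) ->
  measurable [set w | exists i, t i < g i w].
Proof.
move=> mg.
have -> : [set w | exists i, t i < g i w] =
    \bigcup_(i in [set: I]) (g i @^-1` `]t i, +oo[).
  apply/seteqP; split=> w /=.
    by move=> [i lt_ti]; exists i => //=; rewrite in_itv /= lt_ti.
  by move=> [i _]; rewrite /= in_itv /= andbT => lt_ti; exists i.
apply: fin_bigcup_measurable; first exact: finite_finset.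
by move=> i _; rewrite -[_ @^-1` _]setTI; apply: mg.
Qed.

Lemma probability_setC_ge {d : measure_display} {T : measurableType d}
    {R : realType} (P : probability T R) (B : set T) (delta : R) :
  measurable B -> (P B <= delta%:E)%E -> ((1 - delta)%:E <= P (~` B))%E.
Proof.
move=> mB PB_le; rewrite probability_setC //.
have PB_fin : P B \is a fin_num.
  by rewrite ge0_fin_numE // (le_lt_trans (probability_le1 P mB)) // ltry.
by rewrite -(fineK PB_fin) -EFinB lee_fin lerB // -lee_fin fineK.
Qed.

Theorem lemma1 (R : realType) (d : measure_display) (Omega : measurableType d)
  (P : probability Omega R) (dS : measure_display) (Sd : measurableType dS)
  (X : zmodType) (n : nat) (S : 'I_n -> Omega -> Sd) (f : X -> Sd -> R)
  (F : X -> R) (K : nat) (x : 'I_K.+1 -> X) (tau : 'I_K.+1 -> R)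
  (delta gamma : R) (krely : Omega -> 'I_K.+1) :
  iid_samples P S ->
  (forall z, measurable_fun setT (f z)) ->
  (forall z i, F z = fine ('E_P[fun w => f z (S i w)])) ->
  x ord0 = 0 ->
  tau ord0 = 0 ->
  (forall k, 0 <= tau k) ->
  0 < delta < 1 ->
  (P [set w | exists k : 'I_K.+1,
       (tau k < `|F (x k) - Fbar f S (x k) w - (F 0 - Fbar f S 0 w)|)%R ] <= delta%:E)%E ->
  1 <= gamma ->
  (forall w, rms_output gamma (fun k => Fbar f S (x k) w) tau (krely w)) ->
  exists E : set Omega, [/\ measurable E, ((1 - delta)%:E <= P E)%E &
    forall w, E w -> forall k : 'I_K.+1,
      F (x (krely w)) <= F (x k) + (1 + gamma) * tau k].
Proof.
move=> [mS _ _] mf _ _ _ _ _ P_bad _ krely_out.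
set bad := [set w | exists k, _] in P_bad.
have mbad : measurable bad.
  apply: measurable_exists_lt => k.
  apply: measurableT_comp => //; apply: measurable_funB.
    by apply: measurable_funB => //; apply: measurable_Fbar.
  by apply: measurable_funB => //; apply: measurable_Fbar.
exists (~` bad); split; [exact: measurableC | exact: probability_setC_ge |].
move=> w good.
have dev_le j : `|F (x j) - Fbar f S (x j) w - (F 0 - Fbar f S 0 w)| <= tau j.
  by rewrite leNgt; apply/negP => bad_j; apply: good; exists j.
have [feas _] := krely_out w.
exact: (@rms_feasible_risk_le _ _ _ _ _ (fun j => F (x j)) _ _ dev_le feas).
Qed.
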